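(* Let $X$ be a compact metric space, $G$ a countable infinite discrete amenable group acting continuously on $X$, and suppose $(X,G)$ has the $g$-almost product property with associated map $m$. Let $x_1,\dots,x_k\in X$, $\varepsilon_1,\dots,\varepsilon_k\in(0,1)$, and pairwise disjoint $F_1,\dots,F_k\in F(G)$ with each $F_j$ being $m(\varepsilon_j)$-invariant. Let $F=\bigcup_{j=1}^kF_j$. Suppose $\mu_1,\dots,\mu_k\in M(X)$ and $\xi_1,\dots,\xi_k>0$ satisfy $\mathcal E_{F_j}(x_j)\in B(\mu_j,\xi_j)$ for $j=1,\dots,k$. Then for every $y\in\bigcap_{j=1}^kB(g;F_j,x_j,\varepsilon_j)$ and every probability measure $\alpha\in M(X)$, \[ D(\mathcal E_F(y),\alpha)\le\sum_{j=1}^k\frac{|F_j|}{|F|}\big(D(\mu_j,\alpha)+\xi_j+\varepsilon_j+g(\varepsilon_j)\big). \]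
   Context: $M(X)$ is the space of Borel probability measures on $X$. $F(G)$ denotes finite subsets of $G$; for $K,F\in F(G)$, $\partial_K(F)=\{c\in G: Kc\cap F\ne\emptyset,\ Kc\cap(G\setminus F)\ne\emptyset\}$ and $F$ is $(K,\delta)$-invariant if $|\partial_K(F)|/|F|<\delta$; ''$m(\varepsilon)$-invariant'' means $(K,\delta)$-invariant where $m(\varepsilon)=(K,\delta)$. Fix a countable separating family $\{\varphi_i\}$ of continuous functions with $0\le\varphi_i\le1$; $D(\mu,\nu)=\sum_i2^{-i}|\int\varphi_id\mu-\int\varphi_id\nu|$; $B(\mu,\xi)=\{\nu\in M(X):D(\mu,\nu)<\xi\}$; the metric on $X$ is $\rho(x,y)=D(\delta_x,\delta_y)$. $\mathcal E_F(x)=\frac1{|F|}\sum_{s\in F}\delta_{sx}$. $g$-almost product property: $g:(0,1)\to(0,1)$ nondecreasing with $\lim_{r\to0}g(r)=0$; $B(g;F,x,\varepsilon)=\{y: |\{s\in F:\rho(sx,sy)>\varepsilon\}|\le g(\varepsilon)|F|\}$; the property holds with map $m:(0,1)\to F(G)\times(0,1)$ if for all $k$, $\varepsilon_i$, $x_i$ and pairwise disjoint $F_i\in F(G)$ with $F_i$ being $m(\varepsilon_i)$-invariant, $\bigcap_iB(g;F_i,x_i,\varepsilon_i)\ne\emptyset$. *)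

From HB Require Import structures.
From mathcomp Require Import all_boot all_order all_algebra.
From mathcomp Require Import finmap.
From mathcomp Require Import all_classical all_reals all_analysis.

Set Implicit Arguments.
Unset Strict Implicit.
Unset Printing Implicit Defensive.

Import Order.TTheory GRing.Theory Num.Theory.
Import numFieldNormedType.Exports.

Local Open Scope classical_set_scope.
Local Open Scope ring_scope.

Definition is_group {G : Type} (mul : G -> G -> G) (e : G) (inv : G -> G) :=
  [/\ forall a b c, mul a (mul b c) = mul (mul a b) c,
      forall a, mul e a = a,
      forall a, mul a e = a,
      forall a, mul (inv a) a = e &
      forall a, mul a (inv a) = e].

Definition is_cont_action {G : Type} {X : topologicalType}
  (mul : G -> G -> G) (e : G) (act : G -> X -> X) :=
  [/\ forall x, act e x = x,
      forall g h x, act (mul g h) x = act g (act h x) &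
      forall g, continuous (act g)].

(* boundary  d_K(F) = { c in G : Kc meets F and Kc meets G \ F }.
   Every such c is of the form k^-1 f (k in K, f in F), so we may
   enumerate it inside the finite set { k^-1 f }. *)
Definition fbd {G : choiceType} (mul : G -> G -> G) (inv : G -> G)
  (K F : {fset G}) : {fset G} :=
  [fset c in ((fun k f => mul (inv k) f) @2` (K, fun _ => F))%fset |
     [exists k : K, mul (val k) c \in F] &&
     [exists k : K, mul (val k) c \notin F]]%fset.

(* F is (K, delta)-invariant: |d_K(F)| / |F| < delta  (F nonempty so that
   the ratio makes sense) *)
Definition finvariant {R : realType} {G : choiceType} (mul : G -> G -> G)
  (inv : G -> G) (K : {fset G}) (delta : R) (F : {fset G}) : Prop :=
  F != fset0 /\
  (#|` fbd mul inv K F|%:R / #|` F|%:R < delta).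

Definition amenable {R : realType} {G : choiceType} (mul : G -> G -> G)
  (inv : G -> G) : Prop :=
  forall (K : {fset G}) (delta : R), 0 < delta ->
    exists F : {fset G}, finvariant mul inv K delta F.

Definition borelT (X : ptopologicalType) := g_sigma_algebraType (@open X).

(* D(mu, nu) = sum_{i >= 1} 2^-i |int phi_i dmu - int phi_i dnu|,
   written with index i : nat, i >= 0, weight 2^-(i+1) *)
Definition Dm {R : realType} {X : ptopologicalType} (phi : nat -> X -> R)
  (mu nu : {measure set (borelT X) -> \bar R}) : R :=
  limn (fun n => \sum_(i < n) ((2%:R ^- i.+1) *
     `| fine (\int[mu]_x (phi i x)%:E)
        - fine (\int[nu]_x (phi i x)%:E) |)).

Definition rho {R : realType} {X : ptopologicalType} (phi : nat -> X -> R)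
  (x y : X) : R :=
  Dm phi (@dirac _ (borelT X) x R) (@dirac _ (borelT X) y R).

(* empirical measure  E_F(x) = 1/|F| sum_{s in F} delta_{sx} *)
Definition inv_card_nng {R : realType} {G : choiceType} (F : {fset G})
  : {nonneg R} := (#|` F|%:R^-1)%:nng.

Definition empir {R : realType} {X : ptopologicalType} {G : choiceType}
  (e : G) (act : G -> X -> X) (F : {fset G}) (x : X)
  : {measure set (borelT X) -> \bar R} :=
  mscale (@inv_card_nng R G F)
    (msum (fun n => @dirac _ (borelT X) (act (nth e F n) x) R) #|` F|).

Definition Bg {R : realType} {X : ptopologicalType} {G : choiceType}
  (phi : nat -> X -> R) (act : G -> X -> X) (g : R -> R)
  (F : {fset G}) (x : X) (eps : R) : set X :=
  [set y | (#|` [fset s in F | eps < rho phi (act s x) (act s y)]%fset|%:R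
            <= g eps * #|` F|%:R)].

Definition almost_product {R : realType} {X : ptopologicalType} {G : choiceType}
  (mul : G -> G -> G) (inv : G -> G) (phi : nat -> X -> R)
  (act : G -> X -> X) (g : R -> R) (m : R -> {fset G} * R) : Prop :=
  (forall r, 0 < r < 1 -> 0 < g r < 1) /\
  {in `]0, 1[ &, {homo g : r s / r <= s}} /\
  (g r @[r --> 0^'+] --> 0) /\
  (forall r, 0 < r < 1 -> 0 < (m r).2 < 1) /\
  (forall (n : nat) (eps : 'I_n -> R) (x : 'I_n -> X) (F : 'I_n -> {fset G}),
     (forall i, 0 < eps i < 1) ->
     (forall i j, i != j -> [disjoint F i & F j]%fset) ->
     (forall i, finvariant mul inv (m (eps i)).1 (m (eps i)).2 (F i)) ->
     exists y, forall i, Bg phi act g (F i) (x i) (eps i) y).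

(* Every distance D is a dyadic series of differences of integrals of the
   phi_i.  Integrating against E_F(y) is the |F_j|/|F|-weighted average of
   integrating against the E_{F_j}(y), so for each i the triangle inequality
   through E_{F_j}(x_j) and mu_j bounds the i-th term, and these bounds add up
   termwise in the series.  Finally D(E_{F_j}(x_j), E_{F_j}(y)) is at most the
   average over s in F_j of rho(s x_j, s y), where rho <= 1 everywhere and
   rho <= eps_j except for at most g(eps_j) |F_j| elements s. *)

From HB Require Import structures.
From mathcomp Require Import all_boot all_order all_algebra.
From mathcomp Require Import finmap.
From mathcomp Require Import all_classical all_reals all_analysis.
From mathcomp Require Import measurable_realfun lra.

Set Implicit Arguments.
Unset Strict Implicit.
Unset Printing Implicit Defensive.

Import Order.TTheory GRing.Theory Num.Theory.
Import numFieldNormedType.Exports.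

Local Open Scope classical_set_scope.
Local Open Scope ring_scope.

Section dyadic_series.
Variable R : realType.
Implicit Types (d : nat -> R) (c : R).

Definition dyadic_sum d n : R := \sum_(i < n) (2%:R ^- i.+1 * d i).

Definition dyadic_series d : R := limn (dyadic_sum d).

Lemma sum_dyadic_weights n : \sum_(i < n) (2%:R ^- i.+1 : R) = 1 - 2%:R ^- n.
Proof.
elim: n => [|n IHn]; first by rewrite big_ord0 expr0 invr1 subrr.
rewrite big_ord_recr /= IHn exprS invfM.
set t := (2%:R ^+ n)^-1; lra.
Qed.

Lemma dyadic_weight_ge0 i : 0 <= 2%:R ^- i.+1 :> R.
Proof. by rewrite invr_ge0 exprn_ge0. Qed.

Lemma dyadic_sumD d1 d2 n :
  dyadic_sum (fun i => d1 i + d2 i) n = dyadic_sum d1 n + dyadic_sum d2 n.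
Proof. by rewrite /dyadic_sum -big_split; apply: eq_bigr => i _; rewrite mulrDr. Qed.

Section bounded.
Variables (d : nat -> R) (c : R).
Hypothesis d_bounded : forall i, 0 <= d i <= c.

Lemma dyadic_sum_le_bound n : dyadic_sum d n <= c.
Proof.
have c_ge0 : 0 <= c by case/andP: (d_bounded 0); exact: le_trans.
apply: (@le_trans _ _ (\sum_(i < n) 2%:R ^- i.+1 * c)).
  apply: ler_sum => i _; rewrite ler_wpM2l ?dyadic_weight_ge0 //.
  by case/andP: (d_bounded i).
by rewrite -big_distrl /= sum_dyadic_weights ler_piMl // gerBl invr_ge0 exprn_ge0.
Qed.

Lemma nondecreasing_dyadic_sum : nondecreasing_seq (dyadic_sum d).
Proof.
apply/nondecreasing_seqP => n; rewrite /dyadic_sum big_ord_recr /= lerDl.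
by rewrite mulr_ge0 ?dyadic_weight_ge0 //; case/andP: (d_bounded n).
Qed.

Lemma is_cvg_dyadic_sum : cvgn (dyadic_sum d).
Proof.
apply: nondecreasing_is_cvgn; first exact: nondecreasing_dyadic_sum.
by exists c => _ [n _ <-]; exact: dyadic_sum_le_bound.
Qed.

Lemma dyadic_sum_le_series n : dyadic_sum d n <= dyadic_series d.
Proof. exact: nondecreasing_cvgn_le nondecreasing_dyadic_sum is_cvg_dyadic_sum n. Qed.

Lemma dyadic_series_le L : (forall n, dyadic_sum d n <= L) -> dyadic_series d <= L.
Proof. by move=> dL; apply: limr_le; [exact: is_cvg_dyadic_sum | exact: nearW]. Qed.

Lemma dyadic_series_le_bound : dyadic_series d <= c.
Proof. exact: dyadic_series_le dyadic_sum_le_bound. Qed.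

Lemma dyadic_series_le_combination (I : Type) (r : seq I) (w : I -> R)
    (dj : I -> nat -> R) (L : I -> R) :
  (forall j, 0 <= w j) ->
  (forall i, d i <= \sum_(j <- r) w j * dj j i) ->
  (forall j n, dyadic_sum (dj j) n <= L j) ->
  dyadic_series d <= \sum_(j <- r) w j * L j.
Proof.
move=> w_ge0 d_le dj_le; apply: dyadic_series_le => n.
apply: (@le_trans _ _ (\sum_(j <- r) w j * dyadic_sum (dj j) n)).
  rewrite /dyadic_sum.
  under [X in _ <= X]eq_bigr do rewrite big_distrr.
  rewrite exchange_big /=; apply: ler_sum => i _.
  apply: le_trans (ler_wpM2l (dyadic_weight_ge0 i) (d_le i)) _.
  by rewrite mulr_sumr; under eq_bigr do rewrite mulrCA.
by apply: ler_sum => j _; rewrite ler_wpM2l.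
Qed.
End bounded.
End dyadic_series.

Lemma sumr1_card_fset (R : pzSemiRingType) (G : choiceType) (A : {fset G}) :
  \sum_(s <- A) (1 : R) = #|` A|%:R.
Proof. by rewrite -sum1_size natr_sum. Qed.

Lemma big_bigfcup_disjoint (R : nmodType) (G : choiceType) k
    (Fs : 'I_k -> {fset G}) (f : G -> R) :
  (forall i j, i != j -> [disjoint Fs i & Fs j]%fset) ->
  \sum_(s <- (\bigcup_(j | true) Fs j)%fset) f s = \sum_(j < k) \sum_(s <- Fs j) f s.
Proof.
move=> Fs_disj; set F := (\bigcup_(j | true) Fs j)%fset.
transitivity (\sum_(s <- F) \sum_(j < k) (if s \in Fs j then f s else 0)).
  rewrite big_seq [RHS]big_seq; apply: eq_bigr => s sF.
  have [j0 _ s_j0] := bigfcupP _ _ _ _ sF.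
  rewrite (bigD1 j0) //= s_j0 big1 ?addr0 // => j j_neq.
  have /fdisjointP/(_ s s_j0)/negbTE -> // : [disjoint Fs j0 & Fs j]%fset.
  by apply: Fs_disj; rewrite eq_sym.
rewrite exchange_big /=; apply: eq_bigr => j _.
rewrite -(big_fset_incl _ (A := Fs j)).
- by rewrite big_seq [RHS]big_seq; apply: eq_bigr => s ->.
- by apply/fsubsetP => s s_j; apply/bigfcupP; exists j; rewrite ?mem_index_enum.
- by move=> s _ /negbTE ->.
Qed.

Lemma sum_le_card_threshold (R : realDomainType) (G : choiceType) (A : {fset G})
    (r : G -> R) (t gam : R) :
  0 <= t -> (forall s, r s <= 1) ->
  #|` [fset s in A | t < r s]%fset|%:R <= gam * #|` A|%:R ->
  \sum_(s <- A) r s <= #|` A|%:R * (t + gam).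
Proof.
move=> t_ge0 r_le1 few_large.
set B := [fset s in A | t < r s]%fset.
apply: (@le_trans _ _ (\sum_(s <- A) ((if t < r s then 1 else 0) + t))).
  apply: ler_sum => s _; case: ifP => [_|/negbT].
    by rewrite (le_trans (r_le1 s)) ?lerDl.
  by rewrite add0r -leNgt.
rewrite big_split /=.
have -> : \sum_(s <- A) (if t < r s then 1 else 0) = #|` B|%:R :> R.
  rewrite -sumr1_card_fset -(big_fset_incl _ (A := B)).
  - by rewrite big_seq [RHS]big_seq; apply: eq_bigr => s; rewrite !inE => /andP[_ ->].
  - by apply/fsubsetP => s; rewrite !inE => /andP[].
  - by move=> s sA; rewrite !inE sA /= => /negbTE ->.
have -> : \sum_(s <- A) t = #|` A|%:R * t.
  by rewrite -sumr1_card_fset big_distrl /=; under [RHS]eq_bigr do rewrite mul1r.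
by rewrite mulrDr addrC lerD2l mulrC.
Qed.

Lemma ler_dist_convex (R : realFieldType) (I : Type) (r : seq I)
    (w a b m : I -> R) (c : R) :
  (forall j, 0 <= w j) -> \sum_(j <- r) w j = 1 ->
  `|\sum_(j <- r) w j * a j - c| <=
    \sum_(j <- r) w j * (`|b j - a j| + `|m j - b j| + `|m j - c|).
Proof.
move=> w_ge0 w_sum1.
rewrite -{1}[c]mul1r -w_sum1 big_distrl /= -sumrB.
apply: le_trans (ler_norm_sum _ _ _) _; apply: ler_sum => j _.
rewrite -mulrBr normrM ger0_norm // ler_wpM2l //.
have -> : a j - c = (m j - c) - (m j - b j) - (b j - a j) by lra.
have := ler_normB (m j - c - (m j - b j)) (b j - a j).
have := ler_normB (m j - c) (m j - b j).
lra.
Qed.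

Lemma dist_itv01 (R : realFieldType) (a b : R) :
  0 <= a <= 1 -> 0 <= b <= 1 -> 0 <= `|a - b| <= 1.
Proof.
by move=> /andP[? ?] /andP[? ?]; rewrite normr_ge0 ler_norml; apply/andP; split; lra.
Qed.

Section integrals.
Variables (R : realType) (X : ptopologicalType).
Implicit Types (f : X -> R) (z : X).

Lemma continuous_measurable_borel f : continuous f -> measurable_fun [set: borelT X] f.
Proof.
move=> /continuousP f_cont.
apply: (measurability _ (RGenOpens.measurableE R)).
move=> _ [_ [a [b ->] <-]]; rewrite setTI; apply: sub_sigma_algebra.
by apply: f_cont; exact: interval_open.
Qed.

Lemma Rintegral_dirac_continuous f z :
  continuous f -> \int[@dirac _ (borelT X) z R]_x f x = f z.
Proof.
move=> f_cont; rewrite /Rintegral integral_dirac ?diracT ?mul1e //.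
by apply/measurable_EFinP; exact: continuous_measurable_borel.
Qed.

Lemma Rintegral_empir (G : choiceType) (e : G) (act : G -> X -> X)
    (F : {fset G}) f z :
  continuous f -> (forall x, 0 <= f x) ->
  \int[empir e act F z]_x f x = #|` F|%:R^-1 * \sum_(s <- F) f (act s z).
Proof.
move=> f_cont f_ge0.
have mf : measurable_fun [set: borelT X] (fun x => (f x)%:E).
  by apply/measurable_EFinP; exact: continuous_measurable_borel.
rewrite /Rintegral /empir ge0_integral_mscale //; last by move=> x _; rewrite lee_fin.
rewrite ge0_integral_measure_sum //; last by move=> x _; rewrite lee_fin.
under eq_bigr do rewrite integral_dirac // diracT mul1e.
by rewrite sumEFin /= (big_nth e) big_mkord.
Qed.

Lemma Rintegral_empir_itv01 (G : choiceType) (e : G) (act : G -> X -> X)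
    (F : {fset G}) f z :
  continuous f -> (forall x, 0 <= f x <= 1) -> 0 <= \int[empir e act F z]_x f x <= 1.
Proof.
move=> f_cont f_itv.
have f_ge0 x : 0 <= f x by case/andP: (f_itv x).
rewrite Rintegral_empir // mulr_ge0 ?invr_ge0 ?sumr_ge0 //=.
have [-> | F_neq0] := eqVneq #|` F| 0%N; first by rewrite invr0 mul0r.
rewrite ler_pdivrMl ?ltr0n ?lt0n // mulr1 -sumr1_card_fset.
by apply: ler_sum => s _; case/andP: (f_itv (act s z)).
Qed.

Lemma Rintegral_probability_itv01 (P : probability (borelT X) R) f :
  continuous f -> (forall x, 0 <= f x <= 1) -> 0 <= \int[P]_x f x <= 1.
Proof.
move=> f_cont f_itv.
have mf : measurable_fun [set: borelT X] (fun x => (f x)%:E).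
  by apply/measurable_EFinP; exact: continuous_measurable_borel.
have int_ge0 : (0 <= \int[P]_x (f x)%:E)%E.
  by apply: integral_ge0 => x _; rewrite lee_fin; case/andP: (f_itv x).
have int_le1 : (\int[P]_x (f x)%:E <= 1)%E.
  apply: le_trans (probability_le1 P measurableT).
  rewrite -[X in (_ <= X)%E]mul1e -integral_cst //.
  apply: ge0_le_integral => //; last by move=> x _; rewrite lee_fin; case/andP: (f_itv x).
  by move=> x _; rewrite lee_fin; case/andP: (f_itv x).
rewrite /Rintegral; move: int_ge0 int_le1.
by case: (\int[P]_x (f x)%:E)%E => [r| |] //=; rewrite !lee_fin => -> ->.
Qed.

End integrals.

Lemma Rintegral_empir_bigfcup (R : realType) (X : ptopologicalType) (G : choiceType)
    (e : G) (act : G -> X -> X) k (Fs : 'I_k -> {fset G}) (f : X -> R) z :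
  continuous f -> (forall x, 0 <= f x) ->
  (forall i j, i != j -> [disjoint Fs i & Fs j]%fset) ->
  let F := (\bigcup_(j | true) Fs j)%fset in
  \int[empir e act F z]_x f x =
    \sum_(j < k) (#|` Fs j|%:R / #|` F|%:R) * \int[empir e act (Fs j) z]_x f x.
Proof.
move=> f_cont f_ge0 Fs_disj F.
rewrite Rintegral_empir // big_bigfcup_disjoint // big_distrr /=.
apply: eq_bigr => j _; rewrite Rintegral_empir //.
have [/eqP | Fj_neq0] := eqVneq #|` Fs j| 0%N.
  by rewrite cardfs_eq0 => /eqP ->; rewrite big_seq_fset0 !mulr0.
by rewrite mulrA [_ / _ * _]mulrAC mulfV ?pnatr_eq0 // mul1r.
Qed.

Lemma DmE (R : realType) (X : ptopologicalType) (phi : nat -> X -> R) mu nu :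
  Dm phi mu nu =
  dyadic_series (fun i => `|\int[mu]_x phi i x - \int[nu]_x phi i x|).
Proof. by []. Qed.

Section empirical_distance.
Variables (R : realType) (X : ptopologicalType) (G : choiceType).
Variables (phi : nat -> X -> R) (e : G) (act : G -> X -> X).
Hypothesis phi_cont : forall i, continuous (phi i).
Hypothesis phi_itv01 : forall i x, 0 <= phi i x <= 1.

Let phi_ge0 i x : 0 <= phi i x.
Proof. by case/andP: (phi_itv01 i x). Qed.

Let empir_phi_itv01 (F : {fset G}) z i : 0 <= \int[empir e act F z]_x phi i x <= 1.
Proof. exact: Rintegral_empir_itv01. Qed.

Let probability_phi_itv01 (P : probability (borelT X) R) i : 0 <= \int[P]_x phi i x <= 1.
Proof. exact: Rintegral_probability_itv01. Qed.

Lemma rhoE a b : rho phi a b = dyadic_series (fun i => `|phi i a - phi i b|).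
Proof.
rewrite /rho DmE; congr dyadic_series; apply: funext => i.
by rewrite !Rintegral_dirac_continuous.
Qed.

Lemma rho_le1 a b : rho phi a b <= 1.
Proof. by rewrite rhoE; apply: dyadic_series_le_bound => i; exact: dist_itv01. Qed.

Lemma Dm_empir_le_mean_rho (F : {fset G}) (x z : X) :
  Dm phi (empir e act F x) (empir e act F z) <=
    #|` F|%:R^-1 * \sum_(s <- F) rho phi (act s x) (act s z).
Proof.
rewrite DmE big_distrr /=.
apply: (dyadic_series_le_combination (c := 1) _
  (dj := fun s i => `|phi i (act s x) - phi i (act s z)|)).
- by move=> i; apply: dist_itv01.
- by move=> s; rewrite invr_ge0.
- move=> i; rewrite !Rintegral_empir // -mulrBr normrM ger0_norm ?invr_ge0 //.
  rewrite -sumrB -big_distrr /= ler_wpM2l ?invr_ge0 //.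
  exact: ler_norm_sum.
- move=> s n; rewrite rhoE; apply: (dyadic_sum_le_series (c := 1)) => i.
  exact: dist_itv01.
Qed.

Lemma Dm_empir_le_Bg (g : R -> R) (F : {fset G}) (x z : X) (t : R) :
  F != fset0 -> 0 <= t -> Bg phi act g F x t z ->
  Dm phi (empir e act F x) (empir e act F z) <= t + g t.
Proof.
move=> F_neq0 t_ge0 z_Bg; apply: le_trans (Dm_empir_le_mean_rho F x z) _.
rewrite ler_pdivrMl ?ltr0n ?cardfs_gt0 //.
exact: sum_le_card_threshold t_ge0 (fun s => rho_le1 _ _) z_Bg.
Qed.

Lemma Dm_empir_bigfcup_le k (Fs : 'I_k -> {fset G}) (x : 'I_k -> X)
    (mu : 'I_k -> probability (borelT X) R) (alpha : probability (borelT X) R) (y : X) :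
  (forall i j, i != j -> [disjoint Fs i & Fs j]%fset) ->
  let F := (\bigcup_(j | true) Fs j)%fset in
  F != fset0 ->
  Dm phi (empir e act F y) alpha <=
    \sum_(j < k) (#|` Fs j|%:R / #|` F|%:R) *
      (Dm phi (empir e act (Fs j) (x j)) (empir e act (Fs j) y)
       + Dm phi (mu j) (empir e act (Fs j) (x j)) + Dm phi (mu j) alpha).
Proof.
move=> Fs_disj F F_neq0.
have cardF : #|` F|%:R = \sum_(j < k) #|` Fs j|%:R :> R.
  rewrite -sumr1_card_fset big_bigfcup_disjoint //.
  by apply: eq_bigr => j _; rewrite sumr1_card_fset.
have w_sum1 : \sum_(j < k) #|` Fs j|%:R / #|` F|%:R = 1 :> R.
  by rewrite -big_distrl /= -cardF mulfV // pnatr_eq0 cardfs_eq0.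
rewrite DmE; apply: (dyadic_series_le_combination (c := 1) _ (dj := fun j i =>
      `|\int[empir e act (Fs j) (x j)]_z phi i z - \int[empir e act (Fs j) y]_z phi i z|
    + `|\int[mu j]_z phi i z - \int[empir e act (Fs j) (x j)]_z phi i z|
    + `|\int[mu j]_z phi i z - \int[alpha]_z phi i z|)).
- by move=> i; apply: dist_itv01.
- by move=> j; rewrite divr_ge0.
- move=> i; rewrite Rintegral_empir_bigfcup //.
  by apply: ler_dist_convex => // j; rewrite divr_ge0.
- move=> j n; rewrite !dyadic_sumD !DmE.
  by apply: lerD; first apply: lerD;
    apply: (dyadic_sum_le_series (c := 1)) => i; apply: dist_itv01.
Qed.

End empirical_distance.

Theorem mainTheorem3
  (R : realType) (X : ptopologicalType) (G : countType)
  (mul : G -> G -> G) (e : G) (inv : G -> G) (act : G -> X -> X)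
  (phi : nat -> X -> R) (g : R -> R) (m : R -> {fset G} * R)
  (HG : is_group mul e inv)
  (HGinf : ~ finite_set [set: G])
  (HGam : amenable (R := R) mul inv)
  (Hact : is_cont_action mul e act)
  (HXc : compact [set: X]) (HXh : hausdorff_space X)
  (Hphic : forall i, continuous (phi i))
  (Hphi01 : forall i x, 0 <= phi i x <= 1)
  (Hphisep : forall x y : X, x <> y -> exists i, phi i x <> phi i y)
  (Hap : almost_product mul inv phi act g m)
  (k : nat) (Hk : (0 < k)%N)
  (x : 'I_k -> X) (eps : 'I_k -> R) (Fs : 'I_k -> {fset G})
  (mu : 'I_k -> probability (borelT X) R) (xi : 'I_k -> R)
  (Heps : forall j, 0 < eps j < 1)
  (Hdisj : forall i j, i != j -> [disjoint Fs i & Fs j]%fset)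
  (Hinv : forall j, finvariant mul inv (m (eps j)).1 (m (eps j)).2 (Fs j))
  (Hxi : forall j, 0 < xi j)
  (Hball : forall j, Dm phi (mu j) (empir e act (Fs j) (x j)) < xi j)
  (y : X) (Hy : forall j, Bg phi act g (Fs j) (x j) (eps j) y)
  (alpha : probability (borelT X) R) :
  let F := (\bigcup_(j | true) Fs j)%fset in
  Dm phi (empir e act F y) alpha <=
    \sum_(j < k) (#|` Fs j|%:R / #|` F|%:R) *
       (Dm phi (mu j) alpha + xi j + eps j + g (eps j)).
Proof.
cbv zeta; set F := (\bigcup_(j | true) Fs j)%fset.
have Fs_neq0 j : Fs j != fset0 by case: (Hinv j).
have F_neq0 : F != fset0.
  have /fset0Pn [s s_in] := Fs_neq0 (Ordinal Hk).
  apply/fset0Pn; exists s; apply/bigfcupP.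
  by exists (Ordinal Hk); rewrite ?mem_index_enum.
apply: le_trans (Dm_empir_bigfcup_le e act Hphic Hphi01 x mu alpha y Hdisj F_neq0) _.
apply: ler_sum => j _; rewrite ler_wpM2l ?divr_ge0 //.
have eps_ge0 : 0 <= eps j by case/andP: (Heps j) => /ltW.
have := Dm_empir_le_Bg e Hphic Hphi01 (Fs_neq0 j) eps_ge0 (Hy j).
have := Hball j.
lra.
Qed.
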